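(* Let $R$ be a ring with identity and an involution $*$, and let $a\in R$. Then: (i) $a$ is right $(a^*,1)$-invertible if and only if $R=aa^*R$; and $a$ is left $(1,a^* )$-invertible if and only if $R=Ra^*a$; (ii) $a$ is left $(a,a^* )$-invertible if and only if $Ra=Ra^*a^2$; and $a$ is right $(a,a^* )$-invertible if and only if $a^*R=a^*a^2R$; (iii) $a$ is left $(a^*,a)$-invertible if and only if $Ra^*=Ra^2a^*$; and $a$ is right $(a^*,a)$-invertible if and only if $aR=a^2a^*R$.
   Context: An involution is a map $*:R\to R$ with $(x^* )^*=x$, $(xy)^*=y^*x^*$, $(x+y)^*=x^*+y^*$. For $x\in R$: $xR=\{xr:r\in R\}$, $Rx=\{rx:r\in R\}$. For $a,b,c\in R$, $a$ is left $(b,c)$-invertible if there is $y$ with $Ry\subseteq Rc$ and $yab=b$; right $(b,c)$-invertible if there is $y$ with $yR\subseteq bR$ and $cay=c$. *)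

From HB Require Import structures.
From mathcomp Require Import all_boot all_algebra.
Set Implicit Arguments. Unset Strict Implicit. Unset Printing Implicit Defensive.
Import GRing.Theory.
Local Open Scope ring_scope.

Definition involution (R : pzRingType) (star : R -> R) : Prop :=
  (forall x, star (star x) = x) /\
  (forall x y, star (x * y) = star y * star x) /\
  (forall x y, star (x + y) = star x + star y).

Definition in_rprin (R : pzRingType) (x z : R) : Prop := exists r, z = x * r.
Definition in_lprin (R : pzRingType) (x z : R) : Prop := exists r, z = r * x.

Definition left_bc_invertible (R : pzRingType) (a b c : R) : Prop :=
  exists y : R, (forall z, in_lprin y z -> in_lprin c z) /\ y * a * b = b.

Definition right_bc_invertible (R : pzRingType) (a b c : R) : Prop :=
  exists y : R, (forall z, in_rprin y z -> in_rprin b z) /\ c * a * y = c.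

(* For arbitrary b and c, left (b,c)-invertibility of a says exactly that b
   lies in R(cab), i.e. Rb = Rcab, since Rcab is always contained in Rb; dually,
   right (b,c)-invertibility says cR = cabR. Each clause of the proposition is
   this characterisation for b, c among 1, a and a*. *)
From mathcomp Require Import all_boot all_algebra.
Set Implicit Arguments.
Unset Strict Implicit.
Unset Printing Implicit Defensive.
Local Open Scope ring_scope.
Import GRing.Theory.

Section BCInvertibility.
Variable R : pzRingType.
Implicit Types a b c x y : R.

Lemma in_lprin_refl x : in_lprin x x.
Proof. by exists 1; rewrite mul1r. Qed.

Lemma in_rprin_refl x : in_rprin x x.
Proof. by exists 1; rewrite mulr1. Qed.

Lemma lprin_subset x y :
  (forall z, in_lprin x z -> in_lprin y z) <-> in_lprin y x.
Proof.
split=> [sub | [r ->] z [t ->]]; first exact: sub (in_lprin_refl x).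
by exists (t * r); rewrite mulrA.
Qed.

Lemma rprin_subset x y :
  (forall z, in_rprin x z -> in_rprin y z) <-> in_rprin y x.
Proof.
split=> [sub | [r ->] z [t ->]]; first exact: sub (in_rprin_refl x).
by exists (r * t); rewrite mulrA.
Qed.

Lemma lprin_full x : (forall z, in_lprin x z) <-> in_lprin x 1.
Proof.
split=> [full | [r r1] z]; first exact: full.
by exists (z * r); rewrite -mulrA -r1 mulr1.
Qed.

Lemma rprin_full x : (forall z, in_rprin x z) <-> in_rprin x 1.
Proof.
split=> [full | [r r1] z]; first exact: full.
by exists (r * z); rewrite mulrA -r1 mul1r.
Qed.

Lemma lprin_mul_eq x y :
  (forall z, in_lprin x z <-> in_lprin (y * x) z) <-> in_lprin (y * x) x.
Proof.
split=> [eqx | yx_x z]; first exact: (eqx x).1 (in_lprin_refl x).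
split; first exact: (lprin_subset x (y * x)).2.
by apply: (lprin_subset (y * x) x).2; exists y.
Qed.

Lemma rprin_mul_eq x y :
  (forall z, in_rprin x z <-> in_rprin (x * y) z) <-> in_rprin (x * y) x.
Proof.
split=> [eqx | xy_x z]; first exact: (eqx x).1 (in_rprin_refl x).
split; first exact: (rprin_subset x (x * y)).2.
by apply: (rprin_subset (x * y) x).2; exists y.
Qed.

Lemma left_bc_invertibleE a b c :
  left_bc_invertible a b c <-> in_lprin (c * a * b) b.
Proof.
split=> [[y [/lprin_subset [r ->] yab]] | [r rcab]].
  by exists r; rewrite !mulrA yab.
exists (r * c); split; first by apply/lprin_subset; exists r.
by rewrite [RHS]rcab !mulrA.
Qed.

Lemma right_bc_invertibleE a b c :
  right_bc_invertible a b c <-> in_rprin (c * a * b) c.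
Proof.
split=> [[y [/rprin_subset [r ->] cay]] | [r cabr]].
  by exists r; rewrite -mulrA.
exists (b * r); split; first by apply/rprin_subset; exists r.
by rewrite mulrA -cabr.
Qed.

Lemma left_bc_invertible_lprin_eq a b c :
  left_bc_invertible a b c <->
  (forall z, in_lprin b z <-> in_lprin (c * a * b) z).
Proof. exact: iff_trans (left_bc_invertibleE a b c) (iff_sym (lprin_mul_eq _ _)). Qed.

Lemma right_bc_invertible_rprin_eq a b c :
  right_bc_invertible a b c <->
  (forall z, in_rprin c z <-> in_rprin (c * a * b) z).
Proof.
apply: iff_trans (right_bc_invertibleE a b c) _; rewrite -mulrA.
exact: iff_sym (rprin_mul_eq _ _).
Qed.

End BCInvertibility.

Theorem proposition2p19 (R : pzRingType) (star : R -> R) (a : R) :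
  involution star ->
  (* (i) *)
  ((right_bc_invertible a (star a) 1 <->
      (forall z : R, in_rprin (a * star a) z)) /\
   (left_bc_invertible a 1 (star a) <->
      (forall z : R, in_lprin (star a * a) z))) /\
  (* (ii) *)
  ((left_bc_invertible a a (star a) <->
      (forall z : R, in_lprin a z <-> in_lprin (star a * a ^+ 2) z)) /\
   (right_bc_invertible a a (star a) <->
      (forall z : R, in_rprin (star a) z <-> in_rprin (star a * a ^+ 2) z))) /\
  (* (iii) *)
  ((left_bc_invertible a (star a) a <->
      (forall z : R, in_lprin (star a) z <-> in_lprin (a ^+ 2 * star a) z)) /\
   (right_bc_invertible a (star a) a <->
      (forall z : R, in_rprin a z <-> in_rprin (a ^+ 2 * star a) z))).
Proof.
move=> _; rewrite expr2 mulrA; set s := star a.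
split; [split | split; split].
- apply: (iff_trans (right_bc_invertibleE a s 1)).
  by rewrite mul1r; apply: iff_sym (rprin_full (a * s)).
- apply: (iff_trans (left_bc_invertibleE a 1 s)).
  by rewrite mulr1; apply: iff_sym (lprin_full (s * a)).
- exact: left_bc_invertible_lprin_eq.
- exact: right_bc_invertible_rprin_eq.
- exact: left_bc_invertible_lprin_eq.
- exact: right_bc_invertible_rprin_eq.
Qed.
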